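(* Let $\mathfrak g$ be of type $A_n$ and $i\in I$. For $b,b'\in\mathcal B(\infty)$, we have $\widetilde f_i^\ast(b)=b'$ if and only if $\widetilde e_i^\ast(b')=b$.
   Context: $I=\{1,\dots,n\}$. $\mathcal I=\{(s,t)\in\mathbb Z_{>0}\times I:s+t\le n+1\}$; $\mathcal B(\infty)$ is the set of $b=(b_{s,t})_{(s,t)\in\mathcal I}\in\mathbb Z_{\ge0}^{\mathcal I}$ with $b_{1,k}\ge b_{2,k-1}\ge\dots\ge b_{k,1}$ for $1\le k\le n$. Convention: $b_{s,t}=0$, $\mathbf e_{s,t}=0$ for $(s,t)\notin\mathcal I$. $\partial^\ast_{s,t}(b)=b_{s-1,t}-b_{s-1,t+1}-b_{s,t-1}+b_{s,t}$. For $1\le k\le i$: $\Sigma^\ast_k(b)=\sum_{t=1}^k\partial^\ast_{t,i+1-t}(b)$; $\varepsilon_i^\ast(b)=\max_k\Sigma_k^\ast(b)$; $m_i^\ast(b)$, $M_i^\ast(b)$ the smallest and largest maximizing $k$. $\widetilde f_i^\ast(b)=b+\sum_{t=1}^{m_i^\ast(b)}(\mathbf e_{t,i+1-t}-\mathbf e_{t-1,i+1-t})$; $\widetilde e_i^\ast(b)=b-\sum_{t=1}^{M_i^\ast(b)}(\mathbf e_{t,i+1-t}-\mathbf e_{t-1,i+1-t})$ if $\varepsilon_i^\ast(b)>0$, else $\widetilde e_i^\ast(b)=\mathbf 0$ (formal symbol). *)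

From HB Require Import structures.
From mathcomp Require Import all_boot all_order all_algebra.
Set Implicit Arguments. Unset Strict Implicit. Unset Printing Implicit Defensive.
Import Order.TTheory GRing.Theory Num.Theory.
Local Open Scope ring_scope.

(* An element of Z^{\mathcal I} is encoded as a function nat -> nat -> int
   which vanishes outside \mathcal I (this realizes the convention
   b_{s,t} = 0 for (s,t) \notin \mathcal I). *)
Definition vec := nat -> nat -> int.

Definition inI (n s t : nat) : bool :=
  [&& (0 < s)%N, (0 < t)%N, (t <= n)%N & (s + t <= n.+1)%N].

Definition inB (n : nat) (b : vec) : Prop :=
  [/\ (forall s t, ~~ inI n s t -> b s t = 0),
      (forall s t, inI n s t -> 0 <= b s t) &
      (forall k s, (1 <= k <= n)%N -> (1 <= s)%N -> (s < k)%N ->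
         b s.+1 (k - s)%N <= b s (k.+1 - s)%N)].

Definition evec (n s t : nat) : vec :=
  fun s' t' => if [&& s' == s, t' == t & inI n s t] then 1 else 0.

Definition vadd (b c : vec) : vec := fun s t => b s t + c s t.
Definition vsub (b c : vec) : vec := fun s t => b s t - c s t.
Definition vsum (m : nat) (F : nat -> vec) : vec :=
  fun s t => \sum_(1 <= k < m.+1) F k s t.

(* \partial^*_{s,t}(b) = b_{s-1,t} - b_{s-1,t+1} - b_{s,t-1} + b_{s,t};
   for s >= 1 and t >= 1 (s-1, t-1 are natural numbers; index 0 is outside I) *)
Definition dstar (b : vec) (s t : nat) : int :=
  b s.-1 t - b s.-1 t.+1 - b s t.-1 + b s t.

Definition Sigma (i : nat) (b : vec) (k : nat) : int :=
  \sum_(1 <= t < k.+1) dstar b t (i.+1 - t)%N.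

Definition eps_star (i : nat) (b : vec) : int :=
  \big[Num.max/Sigma i b 1]_(1 <= k < i.+1) Sigma i b k.

Definition m_star (i : nat) (b : vec) : nat :=
  head 0%N [seq k <- iota 1 i | Sigma i b k == eps_star i b].
Definition M_star (i : nat) (b : vec) : nat :=
  last 0%N [seq k <- iota 1 i | Sigma i b k == eps_star i b].

Definition step (n i t : nat) : vec :=
  vsub (evec n t (i.+1 - t)%N) (evec n t.-1 (i.+1 - t)%N).

Definition f_star (n i : nat) (b : vec) : vec :=
  vadd b (vsum (m_star i b) (step n i)).

(* \widetilde e^*_i ; None stands for the formal symbol 0 *)
Definition e_star (n i : nat) (b : vec) : option vec :=
  if 0 < eps_star i b then Some (vsub b (vsum (M_star i b) (step n i)))
  else None.

From mathcomp Require Import all_boot all_order all_algebra zify.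
From Stdlib Require Import FunctionalExtensionality.
Set Implicit Arguments. Unset Strict Implicit. Unset Printing Implicit Defensive.
Import Order.TTheory GRing.Theory Num.Theory.
Local Open Scope ring_scope.

(* By telescoping, Sigma^*_k(b) = b_{k,i+1-k} - b_{k,i-k}.  Hence adding the
   vector sum_{t<=m} (e_{t,i+1-t} - e_{t-1,i+1-t}) raises Sigma^*_k by 2 for
   k < m, by 1 at k = m, and leaves it unchanged for k > m.  If m is the first
   maximiser of Sigma^*(b), it becomes the last maximiser of Sigma^*(f_i^* b),
   whose maximum eps_i^*(b) + 1 is positive, so e_i^* subtracts the same vector;
   symmetrically, subtracting the vector for the last maximiser m of
   Sigma^*(b') makes m the first maximiser, so f_i^* adds it back. *)

Section MaxOnInterval.

Variables (i : nat) (F : nat -> int).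

(* [eps_star i b] is convertible to [max_on i (Sigma i b)]. *)
Definition max_on : int := \big[Num.max/F 1%N]_(1 <= k < i.+1) F k.

Definition is_first_argmax (m : nat) : Prop :=
  [/\ (1 <= m <= i)%N, F m = max_on & forall k, (1 <= k < m)%N -> F k < max_on].

Definition is_last_argmax (m : nat) : Prop :=
  [/\ (1 <= m <= i)%N, F m = max_on & forall k, (m < k <= i)%N -> F k < max_on].

Lemma le_max_on k : (1 <= k <= i)%N -> F k <= max_on.
Proof. by move=> hk; apply: le_bigmax_seq; rewrite // mem_index_iota ltnS. Qed.

Lemma max_on_attained : (0 < i)%N -> exists2 k, (1 <= k <= i)%N & F k = max_on.
Proof.
move=> i_gt0; rewrite /max_on big_seq.
apply: (big_ind (fun y => exists2 k, (1 <= k <= i)%N & F k = y)).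
- by exists 1%N; rewrite ?i_gt0.
- move=> x y [kx hkx <-] [ky hky <-].
  by rewrite maxEle; case: ifP; [exists ky | exists kx].
- by move=> k; rewrite mem_index_iota ltnS => hk; exists k.
Qed.

Lemma max_onE E : (exists2 k, (1 <= k <= i)%N & F k = E) ->
  (forall k, (1 <= k <= i)%N -> F k <= E) -> max_on = E.
Proof.
move=> [k0 hk0 <-] ub; apply/le_anti; rewrite le_max_on // andbT.
rewrite /max_on big_seq; apply: bigmax_le => [|k]; first by apply: ub; lia.
by rewrite mem_index_iota ltnS; apply: ub.
Qed.

Lemma first_argmax_exists : (0 < i)%N -> exists m, is_first_argmax m.
Proof.
move=> /max_on_attained[k0 hk0 Fk0].
have ex : exists k, (1 <= k <= i)%N && (F k == max_on) by exists k0; rewrite hk0 Fk0 eqxx.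
case: (ex_minnP ex) => m /andP[hm /eqP Fm] min_m; exists m; split=> // k hk.
rewrite lt_neqAle le_max_on ?andbT; last by lia.
by apply/eqP=> Fk; have := min_m k; rewrite Fk eqxx; lia.
Qed.

Lemma last_argmax_exists : (0 < i)%N -> exists m, is_last_argmax m.
Proof.
move=> /max_on_attained[k0 hk0 Fk0].
have ex : exists k, (1 <= k <= i)%N && (F k == max_on) by exists k0; rewrite hk0 Fk0 eqxx.
have ub k : (1 <= k <= i)%N && (F k == max_on) -> (k <= i)%N by case/andP=> /andP[].
case: (ex_maxnP ex ub) => m /andP[hm /eqP Fm] max_m; exists m; split=> // k hk.
rewrite lt_neqAle le_max_on ?andbT; last by lia.
by apply/eqP=> Fk; have := max_m k; rewrite Fk eqxx; lia.
Qed.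

End MaxOnInterval.

Lemma head_filter_iota (P : pred nat) a n m :
  (a <= m < a + n)%N -> P m -> (forall k, (a <= k < m)%N -> ~~ P k) ->
  head 0%N [seq k <- iota a n | P k] = m.
Proof.
move=> hm Pm before_m.
have -> : n = (m - a + (a + n - m.+1).+1)%N by lia.
rewrite iotaD filter_cat subnKC; last by lia.
rewrite (@eq_in_filter _ P pred0) ?filter_pred0 /= ?Pm // => k.
rewrite mem_iota subnKC => [hk|]; [exact/negbTE/before_m | lia].
Qed.

Lemma last_filter_iota (P : pred nat) a n m :
  (a <= m < a + n)%N -> P m -> (forall k, (m < k < a + n)%N -> ~~ P k) ->
  last 0%N [seq k <- iota a n | P k] = m.
Proof.
move=> hm Pm after_m.
have -> : n = (m - a + (a + n - m.+1).+1)%N by lia.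
rewrite iotaD filter_cat subnKC /=; last by lia.
rewrite Pm (@eq_in_filter _ P pred0 (iota m.+1 _)) ?filter_pred0 ?cats1 ?last_rcons //.
move=> k.
rewrite mem_iota => hk; apply/negbTE/after_m; lia.
Qed.

Section ShiftArgmax.

Variables (i m : nat) (F G : nat -> int).
Hypothesis FG : forall k, (1 <= k <= i)%N -> G k = F k + (k <= m)%N%:R + (k < m)%N%:R.

Lemma max_on_shift : is_first_argmax i F m -> max_on i G = max_on i F + 1.
Proof.
move=> [hm Fm Flt]; apply: max_onE; first by exists m; rewrite // FG // Fm; lia.
move=> k hk; rewrite FG //; have := le_max_on F hk; have := Flt k; lia.
Qed.

Lemma max_on_unshift : is_last_argmax i G m -> max_on i F = max_on i G - 1.
Proof.
move=> [hm Gm Glt]; apply: max_onE; first by exists m; rewrite // -Gm FG //; lia.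
move=> k hk; have := FG hk; have := le_max_on G hk; have := Glt k; lia.
Qed.

Lemma first_to_last_argmax : is_first_argmax i F m -> is_last_argmax i G m.
Proof.
move=> Fm; have maxG := max_on_shift Fm; case: Fm => hm Fm _; split=> //.
- by rewrite maxG FG // Fm; lia.
- move=> k hk; have hk' : (1 <= k <= i)%N by lia.
  by rewrite maxG FG //; have := le_max_on F hk'; lia.
Qed.

Lemma last_to_first_argmax : is_last_argmax i G m -> is_first_argmax i F m.
Proof.
move=> Gm; have maxF := max_on_unshift Gm; case: Gm => hm Gm _; split=> //.
- by rewrite maxF -Gm FG //; lia.
- move=> k hk; have hk' : (1 <= k <= i)%N by lia.
  by rewrite maxF; have := FG hk'; have := le_max_on G hk'; lia.
Qed.

End ShiftArgmax.

Lemma evecE n a c s t : evec n a c s t = [&& s == a, t == c & inI n a c]%:R.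
Proof. by rewrite /evec; case: ifP. Qed.

Lemma vsum0 F s t : vsum 0 F s t = 0.
Proof. by rewrite /vsum big_geq. Qed.

Lemma vsumS m F s t : vsum m.+1 F s t = vsum m F s t + F m.+1 s t.
Proof. by rewrite /vsum big_nat_recr. Qed.

Section StringSteps.

Variables (n i : nat).
Hypothesis le_in : (i <= n)%N.

Lemma vsum_stepE m s t : (m <= i)%N ->
  vsum m (step n i) s t =
  ((s + t == i.+1) && (1 <= s <= m))%N%:R - ((s + t == i) && (1 <= s < m))%N%:R.
Proof.
elim: m => [|m IH] hm.
  by rewrite vsum0 ltn0; case: s => [|s] /=; rewrite ?andbF.
have top : inI n m.+1 (i - m) by rewrite /inI; lia.
have low : inI n m (i - m) = (0 < m)%N by rewrite /inI; lia.
rewrite vsumS IH ?(ltnW hm) // /step /vsub subSS !evecE top low /=.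
have [->|ne1] := eqVneq s m.+1; first by lia.
have [->|ne0] := eqVneq s m; first by lia.
lia.
Qed.

End StringSteps.

Lemma Sigma_telescope i b k : (forall t, b 0%N t = 0) -> (k <= i)%N ->
  Sigma i b k = b k (i.+1 - k)%N - b k (i - k)%N.
Proof.
move=> row0 le_ki; rewrite /Sigma big_add1 /=.
rewrite (telescope_sumr_eq (fun t => b t (i.+1 - t)%N - b t (i - t)%N)) // => [|t ht].
  by rewrite !subn0 !row0 subrr subr0.
rewrite /dstar subSS subnS -subSn; last by lia.
by rewrite /=; lia.
Qed.

Lemma Sigma_vadd i b c k : Sigma i (vadd b c) k = Sigma i b k + Sigma i c k.
Proof.
rewrite /Sigma -big_split; apply: eq_bigr => t _; rewrite /dstar /vadd /=; lia.
Qed.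

Lemma Sigma_vsum_step n i m k : (i <= n)%N -> (m <= i)%N -> (1 <= k <= i)%N ->
  Sigma i (vsum m (step n i)) k = (k <= m)%N%:R + (k < m)%N%:R.
Proof.
move=> le_in le_mi hk.
rewrite Sigma_telescope => [|t|]; last by case/andP: hk.
- by rewrite !(vsum_stepE le_in _ _ le_mi) !subnKC //; lia.
- by rewrite (vsum_stepE le_in _ _ le_mi) /= !andbF subrr.
Qed.

Lemma Sigma_vadd_vsum_step n i m b : (i <= n)%N -> (m <= i)%N ->
  forall k, (1 <= k <= i)%N ->
  Sigma i (vadd b (vsum m (step n i))) k = Sigma i b k + (k <= m)%N%:R + (k < m)%N%:R.
Proof. by move=> le_in le_mi k hk; rewrite Sigma_vadd Sigma_vsum_step // addrA. Qed.

Lemma vaddK b c : vsub (vadd b c) c = b.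
Proof. by do 2 apply: functional_extensionality => ?; rewrite /vsub /vadd addrK. Qed.

Lemma vsubK b c : vadd (vsub b c) c = b.
Proof. by do 2 apply: functional_extensionality => ?; rewrite /vsub /vadd subrK. Qed.

Lemma eps_star_ge0 n i b : (1 <= i <= n)%N -> inB n b -> 0 <= eps_star i b.
Proof.
move=> hi [out nonneg _].
apply: le_trans (le_max_on (Sigma i b) (_ : (1 <= i <= i)%N)); last lia.
rewrite Sigma_telescope // => [|t]; last by apply: out; rewrite /inI.
rewrite subnn subSn // subnn (out i 0%N) ?subr0; last by rewrite /inI andbF.
by apply: nonneg; rewrite /inI; lia.
Qed.

Lemma m_star_eq i b m : is_first_argmax i (Sigma i b) m -> m_star i b = m.
Proof.
case=> hm Fm before_m; apply: head_filter_iota => [||k hk]; first lia.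
  exact/eqP.
by rewrite lt_eqF ?before_m.
Qed.

Lemma M_star_eq i b m : is_last_argmax i (Sigma i b) m -> M_star i b = m.
Proof.
case=> hm Fm after_m; apply: last_filter_iota => [||k hk]; first lia.
  exact/eqP.
by rewrite lt_eqF ?after_m //; lia.
Qed.

Lemma m_star_first_argmax i b : (0 < i)%N -> is_first_argmax i (Sigma i b) (m_star i b).
Proof. by case/(first_argmax_exists (Sigma i b)) => m hm; rewrite (m_star_eq hm). Qed.

Lemma M_star_last_argmax i b : (0 < i)%N -> is_last_argmax i (Sigma i b) (M_star i b).
Proof. by case/(last_argmax_exists (Sigma i b)) => m hm; rewrite (M_star_eq hm). Qed.

Theorem proposition6p6 (n i : nat) (b b' : vec) :
  (1 <= i <= n)%N -> inB n b -> inB n b' ->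
  (f_star n i b = b' <-> e_star n i b' = Some b).
Proof.
move=> hi hB _; have /andP[i_gt0 le_in] := hi.
split=> [<- | ].
- have first_m := m_star_first_argmax b i_gt0.
  have le_mi : (m_star i b <= i)%N by case: first_m => /andP[].
  have shift := Sigma_vadd_vsum_step b le_in le_mi.
  have eps_f : eps_star i (f_star n i b) = eps_star i b + 1 := max_on_shift shift first_m.
  rewrite /e_star eps_f (M_star_eq (first_to_last_argmax shift first_m)).
  rewrite ifT ?vaddK //; have := eps_star_ge0 hi hB; lia.
- rewrite /e_star; case: ifP => // _ [<-].
  have last_M := M_star_last_argmax b' i_gt0.
  have le_Mi : (M_star i b' <= i)%N by case: last_M => /andP[].
  have := Sigma_vadd_vsum_step (vsub b' (vsum (M_star i b') (step n i))) le_in le_Mi.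
  rewrite vsubK => shift.
  by rewrite /f_star (m_star_eq (last_to_first_argmax shift last_M)) vsubK.
Qed.
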